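(* Let $c_r>0$, $c_e>0$, and let $\mu$ be a finite (nonnegative) measure on $\mathbb{R}$. For closed intervals $I,J\subseteq\mathbb{R}$ (range conditions on a fixed indexed attribute), define the merge function $M(I,J)$ to be the interval hull $I\oplus J=[\min(\inf I,\inf J),\max(\sup I,\sup J)]$ if $I\cap J\neq\emptyset$ and $\mu(I\cap J)\,(c_r+c_e)>c_e\,\mu(I\cup J)$, and $M(I,J)=\emptyset$ otherwise. Let $x,y,z$ be closed intervals such that $x\cap y\neq\emptyset$, $M(x,y)=\emptyset$, $M(y,z)\neq\emptyset$ (so the merged candidate $y\oplus z$ exists), and $x\cap z=\emptyset$. Then $M(x,y\oplus z)=\emptyset$.
   Context: Candidate guards are range conditions $a\in[v_1,v_2]$ on an indexed attribute $a$, identified with closed intervals. $\mu(S)$ denotes the estimated number of tuples whose value of $a$ lies in $S$. $c_r$ is the cost of reading a tuple and $c_e$ the cost of evaluating one policy's object conditions on a tuple. The function $M$ decides whether merging two overlapping candidate guards into their interval hull is beneficial, via the condition $\mu(I\cap J)/\mu(I\cup J)>c_e/(c_r+c_e)$ (written multiplicatively above). *)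

From HB Require Import structures.
From mathcomp Require Import all_boot all_order all_algebra.
From mathcomp Require Import all_classical all_reals all_analysis.
Set Implicit Arguments. Unset Strict Implicit. Unset Printing Implicit Defensive.
Import Order.TTheory GRing.Theory Num.Theory.
Local Open Scope classical_set_scope.
Local Open Scope ring_scope.

(* A closed interval [v1, v2] is represented by the pair (v1, v2); the
   hypothesis v1 <= v2 is imposed in the theorem. *)
Definition itv (R : realType) (p : R * R) : set R := `[p.1, p.2].

Definition hull (R : realType) (p q : R * R) : R * R :=
  (Order.min p.1 q.1, Order.max p.2 q.2).

Definition merge_cond (R : realType) (mu : set R -> \bar R) (cr ce : R)
  (p q : R * R) : Prop :=
  (itv p `&` itv q !=set0) /\
  (ce%:E * mu (itv p `|` itv q) < mu (itv p `&` itv q) * (cr + ce)%:E)%E.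

Definition gmerge (R : realType) (mu : set R -> \bar R) (cr ce : R)
  (p q : R * R) : set R :=
  if `[< merge_cond mu cr ce p q >] then itv (hull p q) else set0.

(* Because y and z overlap, their hull y (+) z is just y ∪ z.  As x misses z,
   x ∩ (y (+) z) = x ∩ y, while x ∪ (y (+) z) contains x ∪ y.  The merge
   criterion mu(I ∩ J) (c_r + c_e) > c_e mu(I ∪ J) only gets harder when the
   union grows and the intersection stays the same, so since it fails for
   (x, y) it fails for (x, y (+) z). *)
From HB Require Import structures.
From mathcomp Require Import all_boot all_order all_algebra.
From mathcomp Require Import all_classical all_reals all_analysis.
Set Implicit Arguments. Unset Strict Implicit. Unset Printing Implicit Defensive.
Import Order.TTheory GRing.Theory Num.Theory.
Local Open Scope classical_set_scope.
Local Open Scope ring_scope.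

Section Intervals.
Variable R : realType.
Implicit Types p q : R * R.

Lemma itvE p t : itv p t <-> p.1 <= t <= p.2.
Proof. by rewrite /itv /= in_itv; split. Qed.

Lemma measurable_itv_pair p : measurable (itv p).
Proof. exact: measurable_itv. Qed.

Lemma itv_hull_overlap p q :
  itv p `&` itv q !=set0 -> itv (hull p q) = itv p `|` itv q.
Proof.
case=> w [/itvE/andP[wp1 wp2] /itvE/andP[wq1 wq2]].
apply/seteqP; split => t; last first.
  by case=> /itvE/andP[t1 t2]; apply/itvE;
     rewrite /hull /= ge_min le_max t1 t2 ?orbT.
move=> /itvE; rewrite /hull /= ge_min le_max => /andP[t1 t2].
have [tp1|tp1] := leP p.1 t; have [tp2|tp2] := leP t p.2.
- by left; apply/itvE; rewrite tp1 tp2.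
- right; apply/itvE; rewrite (le_trans wq1 (le_trans wp2 (ltW tp2))) /=.
  by case/orP: t2 => // /(lt_le_trans tp2); rewrite ltxx.
- right; apply/itvE; rewrite (le_trans (ltW tp1) (le_trans wp1 wq2)) andbT.
  by case/orP: t1 => // /le_lt_trans/(_ tp1); rewrite ltxx.
- by move: (lt_le_trans (lt_trans tp2 tp1) (le_trans wp1 wp2)); rewrite ltxx.
Qed.

End Intervals.

Section Merge.
Variables (R : realType) (cr ce : R).
Implicit Types p q : R * R.

Section AnySetFunction.
Variable mu : set R -> \bar R.

Lemma gmerge_set0 p q : ~ merge_cond mu cr ce p q -> gmerge mu cr ce p q = set0.
Proof. by move=> ncond; rewrite /gmerge asboolF. Qed.

Lemma gmerge_neq0 p q : gmerge mu cr ce p q !=set0 -> merge_cond mu cr ce p q.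
Proof. by move=> [t]; rewrite /gmerge; case: asboolP. Qed.

Lemma gmerge_eq0 p q : p.1 <= p.2 ->
  gmerge mu cr ce p q = set0 -> ~ merge_cond mu cr ce p q.
Proof.
move=> hp M0 cond; have : gmerge mu cr ce p q p.1.
  by rewrite /gmerge asboolT //; apply/itvE; rewrite /hull /= ge_min le_max lexx hp.
by rewrite M0.
Qed.

End AnySetFunction.

Variable mu : {measure set R -> \bar R}.

Lemma merge_cond_antitone p q q' : 0 <= ce ->
  itv p `&` itv q' = itv p `&` itv q ->
  itv p `|` itv q `<=` itv p `|` itv q' ->
  merge_cond mu cr ce p q' -> merge_cond mu cr ce p q.
Proof.
move=> ce_ge0 eqI subU [ne0 lt_cond]; rewrite /merge_cond -eqI; split => //.
apply: le_lt_trans lt_cond; apply: lee_wpmul2l; first by rewrite lee_fin.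
by apply: le_measure => //; rewrite inE; apply: measurableU; exact: measurable_itv_pair.
Qed.

End Merge.

Theorem corollary1 (R : realType) (mu : {finite_measure set R -> \bar R})
  (cr ce : R) (hcr : 0 < cr) (hce : 0 < ce) (x y z : R * R)
  (hx : x.1 <= x.2) (hy : y.1 <= y.2) (hz : z.1 <= z.2) :
  itv x `&` itv y !=set0 ->
  gmerge (mu : set R -> \bar R) cr ce x y = set0 ->
  gmerge (mu : set R -> \bar R) cr ce y z !=set0 ->
  itv x `&` itv z = set0 ->
  gmerge (mu : set R -> \bar R) cr ce x (hull y z) = set0.
Proof.
move=> _ Mxy Myz xz0.
have [yz_ne0 _] := gmerge_neq0 Myz.
have hullE := itv_hull_overlap yz_ne0.
apply: gmerge_set0; apply: contra_not (gmerge_eq0 hx Mxy).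
apply: (@merge_cond_antitone _ cr ce mu); first exact: ltW.
- by rewrite hullE setIUr xz0 setU0.
- by rewrite hullE; apply: setUS; exact: subsetUl.
Qed.
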